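(* Let $U:\mathbb{R}^d\to[0,+\infty)$ be convex and $M$-Lipschitz with $M\ge0$. Then for any $\kappa>0$ and $z,z'\in\mathbb{R}^d$, $$\langle\mathrm{prox}^\kappa_U(z)-z,z\rangle\le-\kappa U(z)+\kappa^2M^2+\kappa\{U(z')+M\|z'\|\}.$$
   Context: $\mathrm{prox}^\kappa_U(x)=\arg\min_{\tilde x\in\mathbb{R}^d}\{U(\tilde x)+\|x-\tilde x\|^2/(2\kappa)\}$; $\|\cdot\|$ Euclidean. *)

From HB Require Import structures.
From mathcomp Require Import all_boot all_order all_algebra.
From mathcomp Require Import boolp classical_sets reals.
Set Implicit Arguments. Unset Strict Implicit. Unset Printing Implicit Defensive.
Import Order.TTheory GRing.Theory Num.Theory.
Local Open Scope ring_scope.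
Local Open Scope classical_set_scope.

Definition dotv (R : realType) (d : nat) (u v : 'rV[R]_d) : R :=
  \sum_(i < d) u 0 i * v 0 i.

Definition enorm (R : realType) (d : nat) (u : 'rV[R]_d) : R :=
  Num.sqrt (dotv u u).

Definition convex_fun (R : realType) (d : nat) (U : 'rV[R]_d -> R) : Prop :=
  forall (x y : 'rV[R]_d) (t : R), 0 <= t -> t <= 1 ->
    U (t *: x + (1 - t) *: y) <= t * U x + (1 - t) * U y.

Definition lipschitz_with (R : realType) (d : nat) (M : R)
  (U : 'rV[R]_d -> R) : Prop :=
  forall x y : 'rV[R]_d, `|U x - U y| <= M * enorm (x - y).

(* prox^kappa_U(x) = argmin_{x~} { U(x~) + ||x - x~||^2 / (2 kappa) },
   realized with the choice operator xget (the minimizer is unique and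
   exists for U convex, continuous and kappa > 0). *)
Definition prox (R : realType) (d : nat) (kappa : R) (U : 'rV[R]_d -> R)
  (x : 'rV[R]_d) : 'rV[R]_d :=
  xget 0 [set p | forall q : 'rV[R]_d,
     U p + enorm (x - p) ^+ 2 / (2 * kappa) <=
     U q + enorm (x - q) ^+ 2 / (2 * kappa)].

From mathcomp Require Import all_boot all_order all_algebra.
From mathcomp Require Import boolp classical_sets reals.
From mathcomp Require Import ring lra.
Set Implicit Arguments. Unset Strict Implicit. Unset Printing Implicit Defensive.
Import Order.TTheory GRing.Theory Num.Theory.
Local Open Scope ring_scope.

(* Write p = prox z and a = z - p.  Comparing the prox objective at p with its
   value along the segment from p towards 0 and letting the step go to 0 gives
   the subgradient inequality <a, p> >= kappa (U p - U 0).  Since z = a + p,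
   <p - z, z> = -|a|^2 - <a, p> <= -|a|^2 + kappa (U 0 - U p), and the
   Lipschitz bounds U z - U p <= M |a|, U 0 - U z' <= M |z'| together with
   kappa M |a| - |a|^2 <= kappa^2 M^2 finish the estimate. *)

Section InnerProduct.
Variables (R : realType) (d : nat).
Implicit Types (u v w : 'rV[R]_d) (t : R).

Lemma dotvC u v : dotv u v = dotv v u.
Proof. by apply: eq_bigr => i _; rewrite mulrC. Qed.

Lemma dotvDl u v w : dotv (u + v) w = dotv u w + dotv v w.
Proof. by rewrite /dotv -big_split; apply: eq_bigr => i _; rewrite mxE mulrDl. Qed.

Lemma dotvZl t u v : dotv (t *: u) v = t * dotv u v.
Proof. by rewrite /dotv mulr_sumr; apply: eq_bigr => i _; rewrite mxE mulrA. Qed.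

Lemma dotvNl u v : dotv (- u) v = - dotv u v.
Proof. by rewrite -scaleN1r dotvZl mulN1r. Qed.

Lemma dotvDr u v w : dotv u (v + w) = dotv u v + dotv u w.
Proof. by rewrite dotvC dotvDl !(dotvC u). Qed.

Lemma dotvZr t u v : dotv u (t *: v) = t * dotv u v.
Proof. by rewrite dotvC dotvZl dotvC. Qed.

Lemma dotvNr u v : dotv u (- v) = - dotv u v.
Proof. by rewrite dotvC dotvNl dotvC. Qed.

Lemma dotv0r u : dotv u 0 = 0.
Proof. by apply: big1 => i _; rewrite mxE mulr0. Qed.

Lemma dotvv_ge0 u : 0 <= dotv u u.
Proof. by rewrite sumr_ge0 // => i _; rewrite -expr2 sqr_ge0. Qed.

Lemma enorm_sqr u : enorm u ^+ 2 = dotv u u.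
Proof. by rewrite sqr_sqrtr // dotvv_ge0. Qed.

Lemma enormN u : enorm (- u) = enorm u.
Proof. by rewrite /enorm dotvNl dotvNr opprK. Qed.

Lemma enorm_sqrBZ t u v :
  enorm (u - t *: v) ^+ 2 = enorm u ^+ 2 - 2 * t * dotv u v + t ^+ 2 * enorm v ^+ 2.
Proof.
rewrite !enorm_sqr !dotvDl !dotvDr !dotvNl !dotvNr !dotvZl !dotvZr (dotvC v u).
by rewrite expr2; ring.
Qed.

End InnerProduct.

Lemma lipschitz_with_subr_le (R : realType) (d : nat) (M : R) (U : 'rV[R]_d -> R)
  (x y : 'rV[R]_d) : lipschitz_with M U -> U x - U y <= M * enorm (x - y).
Proof. by move=> /(_ x y); apply: le_trans; apply: ler_norm. Qed.

Lemma ge0_of_small_perturbations (R : realFieldType) (c P : R) : 0 <= P ->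
  (forall t, 0 < t -> t <= 1 -> 0 <= c + t * P) -> 0 <= c.
Proof.
move=> P_ge0 small; apply/ler_addgt0Pr => e e_gt0.
have eP_gt0 : 0 < e + P by rewrite ltr_wpDr.
have t_gt0 : 0 < e / (e + P) by rewrite divr_gt0.
have t_le1 : e / (e + P) <= 1 by rewrite ler_pdivrMr // mul1r lerDl.
have tP_le : e / (e + P) * P <= e.
  by rewrite mulrAC ler_pdivrMr // ler_pM2l // lerDr ltW.
by apply: le_trans (small _ t_gt0 t_le1) _; rewrite lerD2l.
Qed.

Section Prox.
Variables (R : realType) (d : nat) (U : 'rV[R]_d -> R) (kappa : R).
Hypotheses (U_cvx : convex_fun U) (kappa_gt0 : 0 < kappa).

Definition prox_min (z p : 'rV[R]_d) : Prop :=
  forall q, U p + enorm (z - p) ^+ 2 / (2 * kappa) <=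
            U q + enorm (z - q) ^+ 2 / (2 * kappa).

Lemma prox_minP z : prox_min z (prox kappa U z) \/ prox kappa U z = 0.
Proof. by rewrite /prox; case: xgetP => [p _ p_min | _]; [left | right]. Qed.

Lemma prox_min_subgradient z p q : prox_min z p ->
  dotv (z - p) (q - p) <= kappa * (U q - U p).
Proof.
move=> p_min; set a := z - p; set v := q - p.
have kappa_neq0 : kappa != 0 by rewrite gt_eqF.
suff : 0 <= (U q - U p) - dotv a v / kappa.
  by rewrite subr_ge0 ler_pdivrMr // mulrC.
apply: (@ge0_of_small_perturbations _ _ (enorm v ^+ 2 / (2 * kappa))).
  by rewrite divr_ge0 ?sqr_ge0 ?mulr_ge0 ?ltW.
move=> t t_gt0 t_le1.
have step_eq : z - (t *: q + (1 - t) *: p) = a - t *: v.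
  by rewrite /a /v scalerBl scale1r scalerBr addrCA opprD addrA.
have := p_min (t *: q + (1 - t) *: p).
rewrite step_eq enorm_sqrBZ -subr_ge0.
have -> : U (t *: q + (1 - t) *: p) +
      (enorm a ^+ 2 - 2 * t * dotv a v + t ^+ 2 * enorm v ^+ 2) / (2 * kappa) -
      (U p + enorm a ^+ 2 / (2 * kappa)) =
    U (t *: q + (1 - t) *: p) - U p +
      t * (- (dotv a v / kappa) + t * (enorm v ^+ 2 / (2 * kappa))).
  by field.
move=> obj_step; have cvx_step := U_cvx q p (ltW t_gt0) t_le1.
by rewrite -(pmulr_rge0 _ t_gt0); lra.
Qed.

(* Existence of a minimizer is never needed: the junk value 0 that [xget]
   returns otherwise satisfies this bound with equality. *)
Lemma dotv_prox_ge z :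
  kappa * (U (prox kappa U z) - U 0) <= dotv (z - prox kappa U z) (prox kappa U z).
Proof.
case: (prox_minP z) => [p_min | ->]; last by rewrite subrr mulr0 dotv0r.
have := prox_min_subgradient 0 p_min.
by rewrite sub0r dotvNr; lra.
Qed.

End Prox.

Theorem lemma10 (R : realType) (d : nat) (U : 'rV[R]_d -> R) (M : R)
  (U_ge0 : forall x, 0 <= U x) (U_cvx : convex_fun U)
  (M_ge0 : 0 <= M) (U_lip : lipschitz_with M U)
  (kappa : R) (kappa_gt0 : 0 < kappa) (z z' : 'rV[R]_d) :
  dotv (prox kappa U z - z) z <=
    - (kappa * U z) + kappa ^+ 2 * M ^+ 2 + kappa * (U z' + M * enorm z').
Proof.
set p := prox kappa U z; set a := z - p.
have -> : p - z = - a by rewrite opprB.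
rewrite -[z in dotv _ z](subrK p z) -/a dotvNl dotvDr -enorm_sqr.
have subgrad : kappa * (U p - U 0) <= dotv a p by apply: dotv_prox_ge.
have lip_z : kappa * (U z - U p) <= kappa * (M * enorm a).
  exact: ler_wpM2l (ltW kappa_gt0) _ _ (lipschitz_with_subr_le _ _ U_lip).
have lip_z' : kappa * (U 0 - U z') <= kappa * (M * enorm z').
  rewrite -(enormN z') -[- z']sub0r.
  exact: ler_wpM2l (ltW kappa_gt0) _ _ (lipschitz_with_subr_le _ _ U_lip).
have amgm : kappa * M * enorm a - enorm a ^+ 2 <= kappa ^+ 2 * M ^+ 2.
  by have := sqr_ge0 (enorm a - kappa * M); nra.
lra.
Qed.
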